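(* Let $f$ be a modulus function, $\beta\in(0,1]$, $m\ge0$ an integer, $\theta=(k_r)$ a lacunary sequence, and $p=(p_k)$ a sequence of positive reals with $0<h=\inf_kp_k\le p_k\le\sup_kp_k=H<\infty$ such that $\lim_kp_k$ exists and is $>0$. If a sequence $X=(X_k)$ of fuzzy numbers satisfies $\lim_r\frac{1}{h_r^\beta}\sum_{k\in I_r}[f(d(\Delta^mX_k,X'))]^{p_k}=0$ and $\lim_r\frac{1}{h_r^\beta}\sum_{k\in I_r}[f(d(\Delta^mX_k,X''))]^{p_k}=0$ for fuzzy numbers $X',X''$, then $X'=X''$; i.e., the $w_p^\beta(\theta,f,F,\Delta^m)$-limit is unique.
   Context: A fuzzy number is a map $X:\mathbb{R}\to[0,1]$ which is normal, fuzzy convex, upper semicontinuous, with compact closure of $\{t:X(t)>0\}$; $L(\mathbb{R})$ is the set of fuzzy numbers. Level sets $[X]^\alpha=\{t:X(t)\ge\alpha\}$ ($\alpha\in(0,1]$), $[X]^0=\overline{\{t:X(t)>0\}}$, are compact intervals $[u^\alpha,v^\alpha]$. Subtraction: $[X-Y]^\alpha=[u_1^\alpha-v_2^\alpha,v_1^\alpha-u_2^\alpha]$. Metric: $d(X,Y)=\sup_{\alpha\in[0,1]}\max\{|u_1^\alpha-u_2^\alpha|,|v_1^\alpha-v_2^\alpha|\}$. $(\Delta^0X)_k=X_k$, $(\Delta^1X)_k=X_k-X_{k+1}$, $(\Delta^mX)_k=(\Delta^1(\Delta^{m-1}X))_k$. A lacunary sequence is an increasing integer sequence $\theta=(k_r)_{r\ge0}$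 with $k_0=0$, $h_r=k_r-k_{r-1}\to\infty$; $I_r=(k_{r-1},k_r]$. A modulus function is $f:[0,\infty)\to[0,\infty)$ with $f(x)=0$ iff $x=0$, $f(x+y)\le f(x)+f(y)$, $f$ increasing, and $f$ right-continuous at $0$. *)

From HB Require Import structures.
From mathcomp Require Import all_boot all_order all_algebra.
From mathcomp Require Import all_classical all_reals all_analysis.
Set Implicit Arguments. Unset Strict Implicit. Unset Printing Implicit Defensive.
Import Order.TTheory GRing.Theory Num.Theory.
Import numFieldNormedType.Exports.
Local Open Scope classical_set_scope.
Local Open Scope ring_scope.

Section Fuzzy.
Variable R : realType.

Definition is_fuzzy_number (X : R -> R) : Prop :=
  [/\ (forall t, 0 <= X t <= 1),
      (exists t, X t = 1),
      (forall s t l, 0 <= l <= 1 ->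
          Num.min (X s) (X t) <= X (l * s + (1 - l) * t)),
      (forall t (e : R), 0 < e -> \forall s \near t, X s < X t + e)
    & compact (closure [set t | 0 < X t])].

Definition level (X : R -> R) (a : R) : set R :=
  if a == 0 then closure [set t | 0 < X t] else [set t | a <= X t].

Definition lev_lo (X : R -> R) (a : R) : R := inf (level X a).
Definition lev_hi (X : R -> R) (a : R) : R := sup (level X a).

(* X - Y: the fuzzy number with level sets [u1^a - v2^a, v1^a - u2^a],
   i.e. membership (X - Y)(t) = sup {a in (0,1] | t in that interval} (0 if none). *)
Definition fsub (X Y : R -> R) : R -> R := fun t =>
  sup ([set a | 0 < a <= 1 /\
         lev_lo X a - lev_hi Y a <= t <= lev_hi X a - lev_lo Y a] `|` [set 0]).

Definition fdist (X Y : R -> R) : R :=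
  sup [set Num.max `|lev_lo X a - lev_lo Y a| `|lev_hi X a - lev_hi Y a|
       | a in [set a : R | 0 <= a <= 1]].

Fixpoint fdelta (m : nat) (X : nat -> R -> R) : nat -> R -> R :=
  match m with
  | 0 => X
  | m'.+1 => fun k => fsub (fdelta m' X k) (fdelta m' X k.+1)
  end.

Definition is_modulus (f : R -> R) : Prop :=
  [/\ (forall x, 0 <= x -> 0 <= f x),
      (forall x, 0 <= x -> (f x = 0 <-> x = 0)),
      (forall x y, 0 <= x -> 0 <= y -> f (x + y) <= f x + f y),
      (forall x y, 0 <= x -> x <= y -> f x <= f y)
    & f x @[x --> 0^'+] --> f 0].

Definition is_lacunary (th : nat -> nat) : Prop :=
  [/\ th 0 = 0%N,
      (forall r, (th r < th r.+1)%N)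
    & (forall M : nat, exists N : nat, forall r, (N <= r)%N -> (M <= th r.+1 - th r)%N)].

Definition lac_h (th : nat -> nat) (r : nat) : nat := (th r - th r.-1)%N.

Definition wsum (f : R -> R) (beta : R) (m : nat) (th : nat -> nat) (p : nat -> R)
    (X : nat -> R -> R) (L : R -> R) (r : nat) : R :=
  ((lac_h th r)%:R `^ beta)^-1 *
  \sum_((th r.-1).+1 <= k < (th r).+1) (f (fdist (fdelta m X k) L)) `^ (p k).

End Fuzzy.

From HB Require Import structures.
From mathcomp Require Import all_boot all_order all_algebra.
From mathcomp Require Import all_classical all_reals all_analysis.
From mathcomp Require Import ring lra.
Import Order.TTheory GRing.Theory Num.Theory.
Import numFieldNormedType.Exports.
Local Open Scope classical_set_scope.
Local Open Scope ring_scope.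
Set Implicit Arguments. Unset Strict Implicit. Unset Printing Implicit Defensive.

(** Suppose [d(X', X'') = D > 0].  By the triangle inequality, for every [k]
    one of [d(Δ^m X_k, X')], [d(Δ^m X_k, X'')] is at least [D/2], so the sum
    of the two [k]-th terms is at least [c = min(f(D/2), 1)^H > 0].  Adding the
    two hypotheses, the averages [h_r^{-β} Σ_{k ∈ I_r}] of these sums tend to
    [0], but each of them is at least [h_r^{1-β} c ≥ c]: a contradiction.
    Hence [d(X', X'') = 0], and a fuzzy number is determined by its level
    sets, which upper semicontinuity and fuzzy convexity identify with the
    intervals [[u^α, v^α]]. *)

Section FuzzyMetric.
Variable R : realType.
Implicit Types (X Y Z W : R -> R) (M : R).

Definition levels_bounded Y M := forall a : R, 0 <= a <= 1 ->
  level Y a !=set0 /\ (forall t, level Y a t -> `|t| <= M).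

Definition upper_semicontinuous X :=
  forall t (e : R), 0 < e -> \forall s \near t, X s < X t + e.

Lemma closed_norm_le M : closed [set t : R | `|t| <= M].
Proof.
have -> : [set t : R | `|t| <= M] = [set t | t <= M] `&` [set t | -M <= t].
  by apply/seteqP; split=> t /=; rewrite ler_norml andbC => /andP.
by apply: closedI; [exact: closed_le | exact: closed_ge].
Qed.

Lemma levels_bounded_le Y M N : M <= N -> levels_bounded Y M -> levels_bounded Y N.
Proof.
move=> MN hY a ha; have [Yne Yle] := hY a ha.
by split => // t /Yle /le_trans; apply.
Qed.

Lemma lev_bounds Y M a : levels_bounded Y M -> 0 <= a <= 1 ->
  [/\ -M <= lev_lo Y a, lev_lo Y a <= lev_hi Y a & lev_hi Y a <= M].
Proof.
move=> hY ha; have [[t Yt] Yle] := hY a ha.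
have Yle' s : level Y a s -> -M <= s <= M by move/Yle; rewrite ler_norml.
have hl : has_lbound (level Y a) by exists (-M) => s /Yle' /andP[].
have hu : has_ubound (level Y a) by exists M => s /Yle' /andP[].
split.
- by apply: lb_le_inf; [exists t | move=> s /Yle' /andP[]].
- exact: le_trans (ge_inf hl Yt) (ub_le_sup hu Yt).
- by apply: ge_sup; [exists t | move=> s /Yle' /andP[]].
Qed.

Lemma lev_norm_le Y M a : levels_bounded Y M -> 0 <= a <= 1 ->
  `|lev_lo Y a| <= M /\ `|lev_hi Y a| <= M.
Proof.
move=> hY ha; have [lo_ge lo_hi hi_le] := lev_bounds hY ha.
by rewrite !ler_norml lo_ge hi_le (le_trans lo_hi hi_le) (le_trans lo_ge lo_hi).
Qed.

Lemma fuzzy_levels_bounded X : is_fuzzy_number X -> exists M, levels_bounded X M.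
Proof.
case=> _ [t1 Xt1] _ _ /compact_bounded [M [_ HM]].
have supp_le t : closure [set t | 0 < X t] t -> `|t| <= `|M| + 1.
  by move=> Ct; apply: (HM (`|M| + 1)) => //; rewrite (le_lt_trans (ler_norm _)) ?ltrDl.
exists (`|M| + 1) => a /andP[a0 a1]; rewrite /level.
case: eqP => [_|/eqP a_neq0].
  by split=> //; exists t1; apply: subset_closure => /=; rewrite Xt1.
split=> [|t /= aXt]; first by exists t1 => /=; rewrite Xt1.
apply/supp_le/subset_closure/(lt_le_trans _ aXt).
by rewrite lt_neqAle eq_sym a_neq0.
Qed.

Lemma closure_inf (A : set R) : A !=set0 -> has_lbound A -> closure A (inf A).
Proof.
move=> Ane Alb B /nbhs_ballP[eps /= eps0 epsB].
have [e Ae e_lt] := inf_adherent eps0 (conj Ane Alb).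
exists e; split => //; apply: epsB.
rewrite /ball /= distrC ger0_norm ?subr_ge0 ?ge_inf //.
by rewrite ltrBlDl.
Qed.

Lemma usc_upper_level_closed X a :
  upper_semicontinuous X -> closed [set t | a <= X t].
Proof.
move=> usc; apply/closure_id/seteqP; split=> [t|t Ct /=]; first exact: subset_closure.
rewrite leNgt; apply/negP => Xt_lt.
have := usc t (a - X t); rewrite subr_gt0 addrC subrK => /(_ Xt_lt) near_lt.
by have [s [/= /le_lt_trans/[apply]]] := Ct _ near_lt; rewrite ltxx.
Qed.

Lemma quasiconcave_between X a s u t :
  (forall s t l, 0 <= l <= 1 -> Num.min (X s) (X t) <= X (l * s + (1 - l) * t)) ->
  a <= X s -> a <= X u -> s <= t <= u -> a <= X t.
Proof.
move=> conv aXs aXu /andP[st tu].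
have [us|su] := eqVneq s u.
  by have -> : t = s by apply/le_anti; rewrite st us tu.
have su_gt0 : 0 < u - s by rewrite subr_gt0 lt_neqAle su (le_trans st tu).
set l := (u - t) / (u - s).
have l01 : 0 <= l <= 1.
  by rewrite /l divr_ge0 ?(ltW su_gt0) ?subr_ge0 //= ler_pdivrMr // mul1r lerD2l lerN2.
have <- : l * s + (1 - l) * u = t by rewrite /l; field; rewrite subr_eq0 eq_sym.
by apply: le_trans (conv _ _ _ l01); rewrite le_min aXs aXu.
Qed.

Lemma fuzzy_levelE X a t : is_fuzzy_number X -> 0 < a <= 1 ->
  (a <= X t) = (lev_lo X a <= t <= lev_hi X a).
Proof.
move=> hX /andP[a0 a1]; have [M hM] := fuzzy_levels_bounded hX.
have [Sne Sle] := hM a (introT andP (conj (ltW a0) a1)).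
rewrite /lev_lo /lev_hi /level (gt_eqF a0) in Sne Sle *.
set S := [set t | a <= X t] in Sne Sle *.
have Sle' s : S s -> -M <= s <= M by move/Sle; rewrite ler_norml.
have hl : has_lbound S by exists (-M) => s /Sle' /andP[].
have hu : has_ubound S by exists M => s /Sle' /andP[].
have [_ _ conv usc _] := hX.
have S_closed : S = closure S by apply/closure_id/usc_upper_level_closed.
have inf_in : S (inf S) by rewrite {1}S_closed; exact: closure_inf.
have sup_in : S (sup S) by rewrite {1}S_closed; exact: closure_sup.
apply/idP/idP => [aXt|t_in]; first by rewrite ge_inf ?ub_le_sup.
exact: quasiconcave_between conv inf_in sup_in t_in.
Qed.

Lemma le_of_upper_levels X Y t : 0 <= X t <= 1 -> 0 <= Y t ->
  (forall a, 0 < a <= 1 -> a <= X t -> a <= Y t) -> X t <= Y t.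
Proof.
move=> /andP[Xt0 Xt1] Yt0 cuts.
have [->|Xt_neq0] := eqVneq (X t) 0; first exact: Yt0.
by apply: cuts; rewrite ?Xt1 ?andbT ?lt_neqAle 1?eq_sym ?Xt_neq0.
Qed.

Lemma fuzzy_eq_of_levels X Y : is_fuzzy_number X -> is_fuzzy_number Y ->
  (forall a, 0 < a <= 1 -> lev_lo X a = lev_lo Y a /\ lev_hi X a = lev_hi Y a) ->
  X = Y.
Proof.
move=> hX hY levXY.
have cutsXY a t : 0 < a <= 1 -> (a <= X t) = (a <= Y t).
  move=> ha; rewrite (fuzzy_levelE _ hX ha) (fuzzy_levelE _ hY ha).
  by have [-> ->] := levXY a ha.
have [rangeX _ _ _ _] := hX; have [rangeY _ _ _ _] := hY.
apply/funext => t; apply/le_anti/andP; split; apply: le_of_upper_levels => //.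
- by have /andP[] := rangeY t.
- by move=> a ha; rewrite cutsXY.
- by have /andP[] := rangeX t.
- by move=> a ha; rewrite cutsXY.
Qed.

Definition level_dist Y Z (a : R) :=
  Num.max `|lev_lo Y a - lev_lo Z a| `|lev_hi Y a - lev_hi Z a|.

Lemma level_dist_le Y Z M N a : levels_bounded Y M -> levels_bounded Z N ->
  0 <= a <= 1 -> level_dist Y Z a <= M + N.
Proof.
move=> hY hZ ha; have [loY hiY] := lev_norm_le hY ha; have [loZ hiZ] := lev_norm_le hZ ha.
by rewrite ge_max !(le_trans (ler_normB _ _)) ?lerD.
Qed.

Lemma level_dist_le_fdist Y Z M N a : levels_bounded Y M -> levels_bounded Z N ->
  0 <= a <= 1 -> level_dist Y Z a <= fdist Y Z.
Proof.
move=> hY hZ ha; apply: ub_le_sup; last by exists a.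
by exists (M + N) => _ [b hb <-]; exact: level_dist_le hY hZ hb.
Qed.

Lemma fdist_le Y Z x : (forall a, 0 <= a <= 1 -> level_dist Y Z a <= x) ->
  fdist Y Z <= x.
Proof.
move=> le_x; apply: ge_sup; first by exists (level_dist Y Z 0), 0; rewrite //= lexx ler01.
by move=> _ [b hb <-]; exact: le_x.
Qed.

Lemma fdist_triangle Y Z W M N K : levels_bounded Y M -> levels_bounded Z N ->
  levels_bounded W K -> fdist Z W <= fdist Y Z + fdist Y W.
Proof.
move=> hY hZ hW; apply: fdist_le => a ha.
have := level_dist_le_fdist hY hZ ha; have := level_dist_le_fdist hY hW ha.
rewrite /level_dist !ge_max => /andP[loYW hiYW] /andP[loYZ hiYZ].
rewrite (le_trans (ler_distD (lev_lo Y a) _ _)) ?(le_trans (ler_distD (lev_hi Y a) _ _)) //.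
  by rewrite distrC lerD.
by rewrite distrC lerD.
Qed.

Lemma fuzzy_eq_of_fdist_le0 X Y : is_fuzzy_number X -> is_fuzzy_number Y ->
  fdist X Y <= 0 -> X = Y.
Proof.
move=> hX hY dXY_le0; have [M hM] := fuzzy_levels_bounded hX.
have [N hN] := fuzzy_levels_bounded hY.
apply: fuzzy_eq_of_levels => // a /andP[a0 a1].
have := le_trans (level_dist_le_fdist hM hN (introT andP (conj (ltW a0) a1))) dXY_le0.
by rewrite /level_dist ge_max !normr_le0 !subr_eq0 => /andP[/eqP -> /eqP ->].
Qed.

Lemma fsub_out_eq0 Y Z M t : levels_bounded Y M -> levels_bounded Z M ->
  M + M < `|t| -> fsub Y Z t = 0.
Proof.
move=> hY hZ t_out; rewrite /fsub.
suff -> : [set a | 0 < a <= 1 /\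
    lev_lo Y a - lev_hi Z a <= t <= lev_hi Y a - lev_lo Z a] = set0.
  by rewrite set0U sup1.
apply/seteqP; split=> // a /= [/andP[a0 a1] /andP[lo_t t_hi]].
have ha : 0 <= a <= 1 by rewrite a1 ltW.
have [loY _ hiY] := lev_bounds hY ha; have [loZ _ hiZ] := lev_bounds hZ ha.
move: t_out; rewrite ltNge ler_norml => /negP; apply; apply/andP; split.
  by apply: le_trans lo_t; rewrite opprD lerD // lerN2.
by apply: le_trans t_hi _; rewrite lerD // lerNl.
Qed.

Lemma fsub_ge1 Y Z M : levels_bounded Y M -> levels_bounded Z M ->
  1 <= fsub Y Z (lev_lo Y 1 - lev_hi Z 1).
Proof.
move=> hY hZ; have h1 : 0 <= (1 : R) <= 1 by rewrite ler01 lexx.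
have [_ loY_hiY _] := lev_bounds hY h1; have [_ loZ_hiZ _] := lev_bounds hZ h1.
apply: ub_le_sup.
  by exists 1 => x /= [[/andP[_ ->] _ //]|->]; exact: ler01.
left; split; first by rewrite ltr01 lexx.
by rewrite lexx /= lerD // lerN2 (le_trans loZ_hiZ).
Qed.

Lemma fsub_levels_bounded Y Z M : levels_bounded Y M -> levels_bounded Z M ->
  levels_bounded (fsub Y Z) (M + M).
Proof.
move=> hY hZ; set t0 := lev_lo Y 1 - lev_hi Z 1.
have one_le := fsub_ge1 hY hZ.
have supp_le t : 0 < fsub Y Z t -> `|t| <= M + M.
  by apply: contraTT; rewrite -!ltNge => /(fsub_out_eq0 hY hZ) ->; rewrite ltxx.
move=> a /andP[a0 a1]; rewrite /level; case: eqP => [_|/eqP a_neq0].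
  split; first by exists t0; apply: subset_closure; apply: lt_le_trans one_le.
  move=> t /(closureS supp_le).
  by rewrite -(proj1 (closure_id _) (@closed_norm_le (M + M))).
split=> [|t /= aYt]; first by exists t0; apply: le_trans one_le.
by apply/supp_le/(lt_le_trans _ aYt); rewrite lt_neqAle eq_sym a_neq0.
Qed.

Lemma fdelta_levels_bounded m (X : nat -> R -> R) :
  (forall k, is_fuzzy_number (X k)) ->
  forall k, exists M, levels_bounded (fdelta m X k) M.
Proof.
move=> hX; elim: m => [|m IH] k /=; first exact: fuzzy_levels_bounded.
have [M1 h1] := IH k; have [M2 h2] := IH k.+1.
exists (Num.max M1 M2 + Num.max M1 M2); apply: fsub_levels_bounded.
  by apply: levels_bounded_le h1; rewrite le_max lexx.
by apply: levels_bounded_le h2; rewrite le_max lexx orbT.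
Qed.

Lemma fdist_half_le Y Z W M N K : levels_bounded Y M -> levels_bounded Z N ->
  levels_bounded W K -> fdist Z W / 2 <= fdist Y Z \/ fdist Z W / 2 <= fdist Y W.
Proof.
move=> hY hZ hW; have := fdist_triangle hY hZ hW.
by case: (leP (fdist Z W / 2) (fdist Y Z)) => ? ?; [left | right; lra].
Qed.

End FuzzyMetric.

Section LacunaryMean.
Variable R : realType.

Lemma modulus_gt0 (f : R -> R) x : is_modulus f -> 0 < x -> 0 < f x.
Proof.
case=> f_ge0 f_eq0 _ _ _ x_gt0; rewrite lt_neqAle f_ge0 ?ltW // andbT.
by apply/eqP => /esym /(f_eq0 _ (ltW x_gt0)) x0; rewrite x0 ltxx in x_gt0.
Qed.

Lemma powR_ge_le1 (b y q H : R) : 0 < b <= 1 -> b <= y -> 0 <= q <= H ->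
  b `^ H <= y `^ q.
Proof.
move=> hb b_le_y /andP[q0 qH]; have /andP[b0 _] := hb.
apply: le_trans (ger_powR hb qH) _.
by apply: ge0_ler_powR; rewrite // nnegrE ?(le_trans (ltW b0)) // ltW.
Qed.

Lemma lacunary_lac_h_gt0 th r : is_lacunary th -> (0 < r)%N -> (0 < lac_h th r)%N.
Proof. by case=> _ thS _ r0; rewrite /lac_h subn_gt0 -{2}(prednK r0) thS. Qed.

Lemma lac_mean_ge th r beta (g : nat -> R) c : (0 < lac_h th r)%N ->
  0 < beta <= 1 -> 0 <= c -> (forall k, c <= g k) ->
  c <= ((lac_h th r)%:R `^ beta)^-1 * \sum_((th r.-1).+1 <= k < (th r).+1) g k.
Proof.
move=> h_gt0 /andP[_ beta1] c0 c_le.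
have sum_ge : c *+ lac_h th r <= \sum_((th r.-1).+1 <= k < (th r).+1) g k.
  by rewrite -[lac_h th r]subSS -sumr_const_nat; apply: ler_sum_nat => k _.
set h := (lac_h th r)%:R : R in sum_ge *.
have h1 : 1 <= h by rewrite ler1n.
have hb_gt0 : 0 < h `^ beta by rewrite powR_gt0 // (lt_le_trans ltr01).
have hb_le : h `^ beta <= h by exact: ler1_powR.
apply: le_trans (ler_wpM2l _ sum_ge); last by rewrite invr_ge0 ltW.
rewrite -mulr_natr -/h mulrCA; apply: ler_peMr => //.
by rewrite ler_pdivlMl // mulr1.
Qed.

End LacunaryMean.

Theorem theorem3p4 (R : realType) (f : R -> R) (beta : R) (m : nat)
  (th : nat -> nat) (p : nat -> R) (X : nat -> R -> R) (X' X'' : R -> R) :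
  is_modulus f ->
  0 < beta <= 1 ->
  is_lacunary th ->
  (forall k, 0 < p k) ->
  0 < inf (range p) ->
  has_ubound (range p) ->
  cvg (p @ \oo) -> 0 < lim (p @ \oo) ->
  (forall k, is_fuzzy_number (X k)) ->
  is_fuzzy_number X' -> is_fuzzy_number X'' ->
  wsum f beta m th p X X' @ \oo --> 0 ->
  wsum f beta m th p X X'' @ \oo --> 0 ->
  X' = X''.
Proof.
move=> hf hbeta hth p_gt0 _ [H p_le] _ _ hX hX' hX'' lim' lim''.
apply: fuzzy_eq_of_fdist_le0 => //; rewrite leNgt; apply/negP => D_gt0.
set b := Num.min (f (fdist X' X'' / 2)) 1.
have hb : 0 < b <= 1 by rewrite lt_min modulus_gt0 ?divr_gt0 // ltr01 ge_min lexx orbT.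
have c_gt0 : 0 < b `^ H by rewrite powR_gt0 //; case/andP: hb.
have b_le x : fdist X' X'' / 2 <= x -> b <= f x.
  have [_ _ _ f_mono _] := hf; move=> hx.
  by rewrite ge_min (f_mono _ _ _ hx) // ltW // divr_gt0.
have term_ge k : b `^ H <= f (fdist (fdelta m X k) X') `^ p k
                             + f (fdist (fdelta m X k) X'') `^ p k.
  have [M hM] := fdelta_levels_bounded m hX k.
  have [M' hM'] := fuzzy_levels_bounded hX'; have [M'' hM''] := fuzzy_levels_bounded hX''.
  have hp : 0 <= p k <= H by rewrite ltW //= p_le //; exists k.
  have [far'|far''] := fdist_half_le hM hM' hM''.
  - by apply: le_trans (powR_ge_le1 hb (b_le _ far') hp) _; rewrite lerDl powR_ge0.
  - by apply: le_trans (powR_ge_le1 hb (b_le _ far'') hp) _; rewrite lerDr powR_ge0.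
have near_lt : \forall r \near \oo,
    (wsum f beta m th p X X' + wsum f beta m th p X X'') r < b `^ H.
  by apply: (cvgr_lt _ (cvgD lim' lim'')); rewrite addr0.
have [r [r_gt0 r_lt]] := filter_ex (filterI (nbhs_infty_gt 0) near_lt).
move: r_lt; apply/negP; rewrite -leNgt fctE /wsum -mulrDr -big_split /=.
by apply: lac_mean_ge => //; [exact: lacunary_lac_h_gt0 | exact: ltW].
Qed.
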